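(* For $d\in D$ let $d'=d+1/(2N)$ if $d<1/2$, $d'=d$ if $d=1/2$, $d'=d-1/(2N)$ if $d>1/2$, and $f(d)=d'(1-d')$. Then $\sum_{d\in D}f(d)=\frac N6+\frac14-\frac1{6N}$. Moreover, if $T\ge \frac23N^3+N^2-\frac23N$, then for every mixed strategy $\tau$ of the rainmaker, the forecaster strategy $c_t=$ rounding of $p_t=\mathbb P_\tau[a_t=1\mid h_{t-1}]$ to the nearest point of $D$ (fixed tie-breaking) satisfies $\mathbb E[K_T]\le 1/N$.
   Context: Forecasting game: fix a positive integer $N$, the grid $D=\{1/(2N),3/(2N),\dots,(2N-1)/(2N)\}\subset[0,1]$ (which has $N$ points), and a horizon $T$. In each period $t=1,\dots,T$ the rainmaker chooses the weather $a_t\in\{0,1\}$ (1 = rain) and the forecaster chooses a forecast $c_t\in D$; both players have perfect recall, i.e. each may condition its period-$t$ choice on the full history $h_{t-1}=(a_1,c_1,\dots,a_{t-1},c_{t-1})\in(\{0,1\}\times D)^{t-1}$. A pure strategy of a player is a map from histories to its choice set; a mixed strategy is a probability distribution over its (finitely many) pure strategies. For $d\in D$ let $n(d)=\sum_{t=1}^T \mathbf 1_{c_t=d}$ and, when $n(d)>0$, $\bar a(d)=\frac{1}{n(d)}\sum_{t=1}^T\mathbf 1_{c_t=d}\,a_t$. The calibration score is $K_T=\sum_{d\in D}\frac{n(d)}{T}\,|\bar a(d)-d|$ (terms with $n(d)=0$ are $0$); equivalently $K_T=\frac1T\sum_{d\in D}\big|\sum_{t=1}^T\mathbf 1_{c_t=d}(a_t-d)\big|$.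 Expectations are over the random choices of both players. *)

From HB Require Import structures.
From mathcomp Require Import all_boot all_order all_algebra.
From mathcomp Require Import reals.
Set Implicit Arguments. Unset Strict Implicit. Unset Printing Implicit Defensive.
Import Order.TTheory GRing.Theory Num.Theory.
Local Open Scope ring_scope.

Section Game.
Variables (R : realType) (N T : nat).

(* One period's outcome: (weather a_t, index k of forecast c_t = grid k). *)
Definition Stage := (bool * 'I_N)%type.

Definition grid (k : 'I_N) : R := (2 * k + 1)%:R / (2 * N)%:R.

Definition shiftd (d : R) : R :=
  if d < 1/2 then d + 1 / (2 * N)%:R
  else if d == 1/2 then d else d - 1 / (2 * N)%:R.
Definition fd (d : R) : R := shiftd d * (1 - shiftd d).

(* All histories h_{t-1} with t = 1..T, i.e. of length 0..T-1. *)
Definition hists : seq (seq Stage) :=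
  flatten [seq [seq tval t | t : k.-tuple Stage] | k <- iota 0 T].
Definition Hist := seq_sub hists.

Definition Pure := {ffun Hist -> bool}.

Definition act (s : Pure) (h : seq Stage) : bool :=
  if insub h is Some x then s x else false.

Definition consistent (s : Pure) (h : seq Stage) : bool :=
  all (fun i => act s (take i h) == nth false (map fst h) i) (iota 0 (size h)).

(* P_tau[a_t = 1 | h_{t-1} = h]  (0 if h has probability 0). *)
Definition prob_rain (tau : {ffun Pure -> R}) (h : seq Stage) : R :=
  (\sum_(s | consistent s h && act s h) tau s) / (\sum_(s | consistent s h) tau s).

Fixpoint play (s : Pure) (F : seq Stage -> 'I_N) (t : nat) : seq Stage :=
  if t is t'.+1 then
    let h := play s F t' in rcons h (act s h, F h)
  else [::].

Definition calib (p : seq Stage) : R :=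
  T%:R^-1 * \sum_(k < N) `| \sum_(x <- p | x.2 == k) ((x.1)%:R - grid k) |.

End Game.

(* For every grid point d, the forecast probabilities p_t are conditional
   probabilities of rain given the history, so M_d = sum_t 1{c_t = d} (a_t - p_t)
   is a martingale whose increments have conditional variance p_t (1 - p_t).
   Rounding gives |p_t - d| <= 1/(2N), and d' is the point of
   [d - 1/(2N), d + 1/(2N)] closest to 1/2, so this variance is at most f(d) and
   E[M_d^2] <= f(d) E[n(d)].  Now
     T K_T <= sum_d |M_d| + sum_d n(d)/(2N),   |M_d| <= N f(d) + M_d^2 / (4 N f(d)),
   whence E[K_T] <= N (sum_d f(d)) / T + 3/(4N) <= 1/N as soon as
   T >= 4 N^2 sum_d f(d) = (2/3) N^3 + N^2 - (2/3) N.  The value of sum_d f(d)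
   comes from d' = (k+1)/N below 1/2 and d' = k/N above it. *)

From HB Require Import structures.
From mathcomp Require Import all_boot all_order all_algebra.
From mathcomp Require Import reals.
From mathcomp Require Import ring lra zify.
Set Implicit Arguments. Unset Strict Implicit. Unset Printing Implicit Defensive.
Import Order.TTheory GRing.Theory Num.Theory.
Local Open Scope ring_scope.

Section Play.
Variables (N T : nat) (F : seq (Stage N) -> 'I_N).

Lemma size_play (s : Pure N T) u : size (play s F u) = u.
Proof. by elim: u => //= u IH; rewrite size_rcons IH. Qed.

Lemma take_play (s : Pure N T) u v : (v <= u)%N -> take v (play s F u) = play s F v.
Proof.
elim: u => [|u IH] v_le; first by case: v v_le.
rewrite leq_eqVlt in v_le; case/orP: v_le => [/eqP->|v_lt].
  by rewrite take_oversize // size_play.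
by rewrite /= -cats1 takel_cat ?size_play // IH.
Qed.

Lemma nth_play (s : Pure N T) u t x0 : (t < u)%N ->
  nth x0 (play s F u) t = (act s (play s F t), F (play s F t)).
Proof.
elim: u => [|u IH] //= t_lt; rewrite nth_rcons size_play.
rewrite ltnS leq_eqVlt in t_lt; case/orP: t_lt => [/eqP->|t_lt].
  by rewrite ltnn eqxx.
by rewrite t_lt IH.
Qed.

Lemma consistent_rcons (s : Pure N T) h x :
  consistent s (rcons h x) = consistent s h && (act s h == x.1).
Proof.
rewrite /consistent size_rcons -addn1 iotaD all_cat /= andbT add0n.
congr andb.
  apply: eq_in_all => i; rewrite mem_iota add0n => /andP[_ i_lt].
  by rewrite -cats1 take_cat i_lt map_cat nth_cat size_map i_lt.
by rewrite -cats1 take_cat ltnn subnn take0 cats0 map_cat nth_cat size_map ltnn subnn.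
Qed.

Lemma consistent_play (s s' : Pure N T) u :
  consistent s' (play s F u) = (play s' F u == play s F u).
Proof.
elim: u => [|u IH] //=; rewrite consistent_rcons IH /=.
apply/idP/idP; first by case/andP => /eqP-> /eqP->.
by rewrite eqseq_rcons => /andP[/eqP-> /eqP[->]]; rewrite !eqxx.
Qed.

Lemma play_eq_le (s s' : Pure N T) u t : play s F u = play s' F u -> (t <= u)%N ->
  play s F t = play s' F t.
Proof. by move=> E t_le; rewrite -(take_play s t_le) E take_play. Qed.

Lemma act_play_eq (s s' : Pure N T) u t : play s F u = play s' F u -> (t < u)%N ->
  act s (play s F t) = act s' (play s' F t).
Proof.
move=> E t_lt; have := nth_play s (act s (play s F 0), F (play s F 0)) t_lt.
by rewrite E nth_play // => -[].
Qed.
End Play.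

Definition bern_var (R : pzRingType) (q : R) := q * (1 - q).

Section Grid.
Variables (R : realType) (N : nat).
Hypothesis N_gt0 : (0 < N)%N.

Local Notation grid := (grid R).
Local Notation fd := (@fd R N).

Let N_pos : 0 < N%:R :> R. Proof. by rewrite ltr0n. Qed.
Let twoN_pos : 0 < (2 * N)%:R :> R. Proof. by rewrite ltr0n muln_gt0. Qed.
Let N_neq0 : N%:R != 0 :> R. Proof. exact: lt0r_neq0. Qed.
#[local] Hint Resolve N_neq0 : core.
Let half_twoN : 1 / 2 * (2 * N)%:R = N%:R :> R.
Proof. by rewrite natrM; field. Qed.

Lemma ratN2_lt_half a : (a%:R / (2 * N)%:R < 1 / 2 :> R) = (a < N)%N.
Proof. by rewrite ltr_pdivrMr // half_twoN ltr_nat. Qed.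

Lemma ratN2_eq_half a : (a%:R / (2 * N)%:R == 1 / 2 :> R) = (a == N)%N.
Proof.
rewrite -(inj_eq (mulIf (lt0r_neq0 twoN_pos))) mulfVK ?half_twoN ?eqr_nat //.
exact: lt0r_neq0.
Qed.

Lemma grid_add_half (k : 'I_N) : grid k + 1 / (2 * N)%:R = k.+1%:R / N%:R.
Proof. by rewrite /grid !natrM -addn1 !natrD; field. Qed.

Lemma grid_sub_half (k : 'I_N) : grid k - 1 / (2 * N)%:R = k%:R / N%:R.
Proof. by rewrite /grid !natrM natrD; field. Qed.

Lemma dist_grid_le p (k : 'I_N) :
  (`|p - grid k| <= 1 / (2 * N)%:R) = (k%:R / N%:R <= p <= k.+1%:R / N%:R).
Proof. by rewrite ler_distl grid_add_half grid_sub_half. Qed.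

Lemma shiftd_grid (k : 'I_N) : shiftd N (grid k) =
  if (2 * k + 1 < N)%N then k.+1%:R / N%:R
  else if (2 * k + 1 == N)%N then 1 / 2 else k%:R / N%:R.
Proof.
rewrite /shiftd {1 2}/grid ratN2_lt_half ratN2_eq_half.
case: ifP => _; first exact: grid_add_half.
by case: ifP => [/eqP E|_]; [apply/eqP; rewrite ratN2_eq_half E | exact: grid_sub_half].
Qed.

Lemma ratN_le_half a : (a%:R / N%:R <= 1 / 2 :> R) = (2 * a <= N)%N.
Proof. by rewrite ler_pdivrMr // -(ler_nat R) natrM; apply/idP/idP; lra. Qed.

Lemma half_le_ratN a : (1 / 2 <= a%:R / N%:R :> R) = (N <= 2 * a)%N.
Proof. by rewrite ler_pdivlMr // -(ler_nat R) natrM; apply/idP/idP; lra. Qed.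

Lemma ratN_lt1 a : (a%:R / N%:R < 1 :> R) = (a < N)%N.
Proof. by rewrite ltr_pdivrMr // mul1r ltr_nat. Qed.

Lemma grid_near p : 0 <= p <= 1 -> exists k : 'I_N, `|p - grid k| <= 1 / (2 * N)%:R.
Proof.
move=> /andP[p_ge0 p_le1].
have /andP[] := truncn_itv (mulr_ge0 p_ge0 (ltW N_pos)).
set n := Num.truncn _ => n_le n_gt.
have [n_lt|N_le] := ltnP n N.
  exists (Ordinal n_lt); rewrite dist_grid_le /=.
  by rewrite ler_pdivrMr // ler_pdivlMr // n_le ltW.
have N1_lt : (N.-1 < N)%N by rewrite prednK.
exists (Ordinal N1_lt); rewrite dist_grid_le /= prednK //.
have : N%:R <= n%:R :> R by rewrite ler_nat.
rewrite ler_pdivrMr // ler_pdivlMr // -subn1 natrB // => nN.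
apply/andP; split; first lra.
by rewrite -[leRHS]mul1r ler_wpM2r // ltW.
Qed.

Lemma bern_var_le_fd p (k : 'I_N) :
  `|p - grid k| <= 1 / (2 * N)%:R -> bern_var p <= fd (grid k).
Proof.
rewrite dist_grid_le /fd shiftd_grid /bern_var => /andP[lo hi].
case: ltngtP => Hk.
- have : k.+1%:R / N%:R <= 1 / 2 :> R by rewrite ratN_le_half; lia.
  by move: hi; set s := _ / _; nra.
- have : 1 / 2 <= k%:R / N%:R :> R by rewrite half_le_ratN; lia.
  by move: lo; set s := _ / _; nra.
- by have := sqr_ge0 (p - 1 / 2); nra.
Qed.

Lemma fd_grid_gt0 (k : 'I_N) : 0 < fd (grid k).
Proof.
rewrite /fd shiftd_grid; case: ltngtP => Hk.
- have : k.+1%:R / N%:R <= 1 / 2 :> R by rewrite ratN_le_half; lia.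
  have : 0 < k.+1%:R / N%:R :> R by rewrite divr_gt0.
  by set s := _ / _; nra.
- have : 1 / 2 <= k%:R / N%:R :> R by rewrite half_le_ratN; lia.
  have : k%:R / N%:R < 1 :> R by rewrite ratN_lt1.
  by set s := _ / _; nra.
- lra.
Qed.

(* For even [N] the grid has no midpoint, but the two grid points around [1/2]
   both get [d' = 1/2] since [(N/2)/N = 1/2]. *)
Lemma fd_grid (k : 'I_N) : fd (grid k) =
  if (k < N./2)%N then bern_var (k.+1%:R / N%:R)
  else if (k == N./2 :> nat) then 1 / 4 else bern_var (k%:R / N%:R).
Proof.
have -> : fd (grid k) = bern_var (shiftd N (grid k)) by [].
rewrite shiftd_grid -!divn2.
case: (ltngtP k (N %/ 2)) => Hk.
- by rewrite ifT //; lia.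
- by rewrite !ifF //; apply/negbTE; lia.
have [odd_N|even_N] := boolP (2 * k + 1 == N)%N.
  by rewrite ifF ?odd_N; [rewrite /bern_var; lra | apply/negbTE; lia].
rewrite !ifF ?(negbTE even_N) //; last by apply/negbTE; lia.
have -> : k%:R / N%:R = 1 / 2 :> R.
  by apply/le_anti; rewrite ratN_le_half half_le_ratN; apply/andP; split; lia.
rewrite /bern_var; lra.
Qed.

Lemma sum_bern_var_ratN :
  \sum_(k < N) bern_var (k%:R / N%:R) = N%:R / 6 - 1 / (6 * N%:R) :> R.
Proof.
suff -> : forall n, \sum_(k < n) bern_var (k%:R / N%:R) =
    (N%:R * (n%:R * (n%:R - 1)) / 2 - (n%:R - 1) * n%:R * (2 * n%:R - 1) / 6)
    / N%:R ^+ 2 :> R.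
  by field.
elim=> [|n IH]; first by rewrite big_ord0; field.
by rewrite big_ord_recr /= IH /bern_var -addn1 natrD; field.
Qed.

Lemma sum_fd_grid : \sum_(k < N) fd (grid k) = N%:R / 6 + 1 / 4 - 1 / (6 * N%:R).
Proof.
have m_lt : (N./2 < N)%N by rewrite -divn2; lia.
pose B k := bern_var (k%:R / N%:R : R).
have split_at_m :
    \sum_(0 <= k < N./2) B k.+1 + \sum_(N./2.+1 <= k < N) B k = \sum_(k < N) B k.
  rewrite -(big_mkord xpredT) [RHS](big_cat_nat (n := N./2.+1)) //= big_nat_recl //.
  by rewrite (_ : B 0%N = 0) ?add0r // /B /bern_var mulr0n mul0r mul0r.
pose g k := if (k < N./2)%N then B k.+1 else if k == N./2 then 1 / 4 else B k.
transitivity (\sum_(0 <= k < N) g k).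
  by rewrite big_mkord; apply: eq_bigr => k _; exact: fd_grid.
rewrite (big_cat_nat (n := N./2)) ?(ltnW m_lt) //= [X in _ + X]big_ltn //.
rewrite (_ : g N./2 = 1 / 4); last by rewrite /g ltnn eqxx.
rewrite [X in X + _](eq_big_nat _ _ (F2 := fun k => B k.+1)); last first.
  by move=> k /andP[_ k_lt]; rewrite /g k_lt.
rewrite [X in _ + (_ + X)](eq_big_nat _ _ (F2 := B)); last first.
  by move=> k /andP[m_lt_k _]; rewrite /g ltnNge (ltnW m_lt_k) gtn_eqF.
rewrite addrCA split_at_m sum_bern_var_ratN; lra.
Qed.
End Grid.

Section Expectation.
Variables (R : numFieldType) (I : finType) (w : I -> R).

Definition expect (X : I -> R) := \sum_i w i * X i.

Lemma eq_expect (X Y : I -> R) : X =1 Y -> expect X = expect Y.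
Proof. by move=> XY; apply: eq_bigr => i _; rewrite XY. Qed.

Lemma expectD (X Y : I -> R) :
  expect (fun i => X i + Y i) = expect X + expect Y.
Proof. by rewrite -big_split; apply: eq_bigr => i _; rewrite mulrDr. Qed.

Lemma expectB (X Y : I -> R) :
  expect (fun i => X i - Y i) = expect X - expect Y.
Proof. by rewrite -sumrB; apply: eq_bigr => i _; rewrite mulrBr. Qed.

Lemma expectZ c (X : I -> R) : expect (fun i => c * X i) = c * expect X.
Proof. by rewrite mulr_sumr; apply: eq_bigr => i _; rewrite mulrCA. Qed.

Lemma expectZr c (X : I -> R) : expect (fun i => X i * c) = expect X * c.
Proof. by rewrite mulr_suml; apply: eq_bigr => i _; rewrite mulrA. Qed.

Lemma expect_sum (J : finType) (X : J -> I -> R) :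
  expect (fun i => \sum_j X j i) = \sum_j expect (X j).
Proof. by rewrite exchange_big; apply: eq_bigr => i _; rewrite mulr_sumr. Qed.

Lemma expect_cst c : \sum_i w i = 1 -> expect (fun=> c) = c.
Proof. by move=> w1; rewrite /expect -mulr_suml w1 mul1r. Qed.

Hypothesis w_ge0 : forall i, 0 <= w i.

Lemma ler_expect (X Y : I -> R) : (forall i, X i <= Y i) -> expect X <= expect Y.
Proof. by move=> XY; apply: ler_sum => i _; apply: ler_wpM2l. Qed.

Variables (J : eqType) (pi : I -> J).

Definition cond_exp (X : I -> R) i :=
  (\sum_(j | pi j == pi i) w j * X j) / \sum_(j | pi j == pi i) w j.

Lemma expect_cond_exp (g X : I -> R) : (forall i j, pi i = pi j -> g i = g j) ->
  expect (fun i => g i * cond_exp X i) = expect (fun i => g i * X i).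
Proof.
move=> g_pi; pose D i := \sum_(j | pi j == pi i) w j.
have wDK i : w i * D i / D i = w i.
  have [D0|/mulfK-> //] := eqVneq (D i) 0.
  by rewrite (psumr_eq0P (fun j _ => w_ge0 j) D0) ?mul0r.
rewrite /expect /cond_exp.
under eq_bigr => i _ do rewrite mulr_suml !mulr_sumr.
rewrite (exchange_big_dep xpredT) //=; apply: eq_bigr => j _.
transitivity (\sum_(i | pi i == pi j) w i * (g j * (w j * X j) / D j)).
  apply: eq_big => [i|i /eqP pij]; first exact: eq_sym.
  by rewrite (g_pi _ _ pij) /D pij !mulrA.
by rewrite -mulr_suml -/(D j) -[in RHS]wDK; ring.
Qed.
End Expectation.

Lemma normr_le_amgm (R : realFieldType) (a m : R) : 0 < a -> `|m| <= a + m ^+ 2 / (4 * a).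
Proof.
move=> a_gt0; rewrite -real_normK ?num_real //.
have : 0 <= (`|m| - 2 * a) ^+ 2 / (4 * a) by rewrite divr_ge0 ?sqr_ge0 //; lra.
suff -> : (`|m| - 2 * a) ^+ 2 / (4 * a) = a + `|m| ^+ 2 / (4 * a) - `|m| by lra.
by field; lra.
Qed.

Section PredictedRain.
Variables (R : realType) (N T : nat) (tau : {ffun Pure N T -> R}).
Hypothesis tau_ge0 : forall s, 0 <= tau s.

Lemma prob_rain_ge0 h : 0 <= prob_rain tau h.
Proof. by rewrite divr_ge0 // sumr_ge0. Qed.

Lemma prob_rain_le1 h : prob_rain tau h <= 1.
Proof.
rewrite /prob_rain; set a := \sum_(s | _) _; set b := \sum_(s | _) _.
have a_le_b : a <= b.
  rewrite /a /b big_mkcond [leRHS]big_mkcond; apply: ler_sum => s _.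
  by case: consistent; case: act.
have [->|b_neq0] := eqVneq b 0; first by rewrite invr0 mulr0.
by rewrite ler_pdivrMr ?mul1r // lt0r b_neq0 sumr_ge0.
Qed.
End PredictedRain.

Section CalibratedForecaster.
Variables (R : realType) (N T : nat) (tau : {ffun Pure N T -> R}) (rnd : R -> 'I_N).
Hypotheses (N_gt0 : (0 < N)%N) (tau_ge0 : forall s, 0 <= tau s).
Hypothesis rnd_nearest : forall p (k : 'I_N), `|p - grid R (rnd p)| <= `|p - grid R k|.

Let F h := rnd (prob_rain tau h).
Local Notation E := (expect tau).
Let hist u (s : Pure N T) := play s F u.
Let prob u (s : Pure N T) := prob_rain tau (hist u s).
Let rain u (s : Pure N T) : R := (act s (hist u s))%:R.
Let hit (k : 'I_N) u (s : Pure N T) : R := (F (hist u s) == k)%:R.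
Let noise k u (s : Pure N T) := \sum_(t < u) hit k t s * (rain t s - prob t s).

Lemma prob_cond_exp u s : prob u s = cond_exp tau (hist u) (rain u) s.
Proof.
rewrite /prob /prob_rain /cond_exp; congr (_ / _); last first.
  by apply: eq_bigl => s'; rewrite consistent_play.
rewrite big_mkcond [RHS]big_mkcond; apply: eq_bigr => s' _.
rewrite consistent_play /rain /hist; case: eqP => [<-|_] /=; last by [].
by case: act; rewrite ?mulr1 ?mulr0.
Qed.

Lemma expect_martingale_increment u (g : Pure N T -> R) :
  (forall s s', hist u s = hist u s' -> g s = g s') ->
  E (fun s => g s * (rain u s - prob u s)) = 0.
Proof.
move=> g_hist; rewrite (eq_expect _ (fun s => mulrBr (g s) _ _)) expectB.
have -> : E (fun s => g s * prob u s) = E (fun s => g s * rain u s).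
  rewrite -(expect_cond_exp tau_ge0 (rain u) g_hist).
  by apply: eq_expect => s; rewrite prob_cond_exp.
exact: subrr.
Qed.

Lemma prob_itv u s : 0 <= prob u s <= 1.
Proof. by rewrite prob_rain_ge0 ?prob_rain_le1. Qed.

Lemma dist_grid_rnd u s : `|prob u s - grid R (rnd (prob u s))| <= 1 / (2 * N)%:R.
Proof.
have [k k_near] := grid_near N_gt0 (prob_itv u s).
exact: le_trans (rnd_nearest _ k) k_near.
Qed.

Lemma hit_dist_le k t s : hit k t s * `|prob t s - grid R k| <= hit k t s / (2 * N)%:R.
Proof.
rewrite /hit; case: (F (hist t s) =P k) => [<-|_] /=; last by rewrite !mul0r.
by rewrite mul1r; exact: dist_grid_rnd.
Qed.

Lemma hit_bern_var_le k t s :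
  hit k t s * bern_var (prob t s) <= fd N (grid R k) * hit k t s.
Proof.
rewrite /hit; case: (F (hist t s) =P k) => [<-|_] /=; last by rewrite mul0r mulr0.
by rewrite mul1r mulr1; apply: (bern_var_le_fd N_gt0); exact: dist_grid_rnd.
Qed.

Lemma noise_hist k u s s' : hist u s = hist u s' -> noise k u s = noise k u s'.
Proof.
move=> E_hist; apply: eq_bigr => t _; have t_lt := ltn_ord t.
by rewrite /hit /rain /prob /hist (act_play_eq E_hist t_lt) (play_eq_le E_hist (ltnW t_lt)).
Qed.

Lemma expect_noise_sqr k u :
  E (fun s => noise k u s ^+ 2) <= fd N (grid R k) * \sum_(t < u) E (hit k t).
Proof.
elim: u => [|u IH].
  by rewrite big_ord0 mulr0 /expect big1 // => s _; rewrite /noise big_ord0 expr0n mulr0.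
have noise_sqrS s : noise k u.+1 s ^+ 2 = noise k u s ^+ 2
    + 2 * (noise k u s * hit k u s) * (rain u s - prob u s)
    + hit k u s * (1 - 2 * prob u s) * (rain u s - prob u s)
    + hit k u s * bern_var (prob u s).
  (* [(a - p)^2 = (1 - 2p)(a - p) + p(1 - p)] for [a] in [{0, 1}]. *)
  rewrite /noise big_ord_recr /=; set n := \sum_(t < u) _.
  by rewrite /hit /rain /bern_var; case: (_ == k); case: act => /=; ring.
rewrite (eq_expect _ noise_sqrS) !expectD.
rewrite !expect_martingale_increment; first last.
- by move=> s s' E_hist; rewrite (noise_hist k E_hist) /hit E_hist.
- by move=> s s' E_hist; rewrite /hit /prob E_hist.
rewrite big_ord_recr /= mulrDr !addr0 lerD //.
rewrite -expectZ; apply: ler_expect => // s.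
exact: hit_bern_var_le.
Qed.

Lemma sum_play_hit k u s d :
  \sum_(x <- hist u s | x.2 == k) ((x.1)%:R - d) =
  \sum_(t < u) hit k t s * (rain t s - d).
Proof.
elim: u => [|u IH]; first by rewrite big_nil big_ord0.
rewrite /hist /= big_rcons -/(hist u s) IH big_ord_recr /=; congr (_ + _).
by rewrite /hit /rain; case: (F (hist u s) == k) => /=; rewrite ?mul1r ?mul0r.
Qed.

Lemma sum_hit t s : \sum_k hit k t s = 1.
Proof.
rewrite (bigD1 (F (hist t s))) //= /hit eqxx big1 ?addr0 // => k.
by rewrite eq_sym => /negbTE->.
Qed.

Let spread (k : 'I_N) := N%:R * fd N (grid R k).

Let spread_gt0 k : 0 < spread k.
Proof. by rewrite mulr_gt0 ?ltr0n ?fd_grid_gt0. Qed.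

Lemma norm_calib_term_le k s :
  `|\sum_(x <- hist T s | x.2 == k) ((x.1)%:R - grid R k)| <=
  spread k + noise k T s ^+ 2 / (4 * spread k) + (\sum_(t < T) hit k t s) / (2 * N)%:R.
Proof.
rewrite sum_play_hit.
have -> : \sum_(t < T) hit k t s * (rain t s - grid R k) =
    noise k T s + \sum_(t < T) hit k t s * (prob t s - grid R k).
  by rewrite -big_split; apply: eq_bigr => t _ /=; ring.
apply: le_trans (ler_normD _ _) _; apply: lerD; first exact: normr_le_amgm.
apply: le_trans (ler_norm_sum _ _ _) _; rewrite mulr_suml; apply: ler_sum => t _.
by rewrite normrM ger0_norm ?ler0n //; exact: hit_dist_le.
Qed.

Lemma calib_play_le s : calib R T (hist T s) <=
  T%:R^-1 * (\sum_k (spread k + noise k T s ^+ 2 / (4 * spread k)) + T%:R / (2 * N)%:R).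
Proof.
rewrite /calib ler_wpM2l ?invr_ge0 ?ler0n //.
apply: le_trans (ler_sum _ (fun k _ => norm_calib_term_le k s)) _.
rewrite big_split /= lerD2l -mulr_suml exchange_big /=.
by under eq_bigr do rewrite sum_hit; rewrite sumr_const card_ord.
Qed.

Lemma sum_expect_noise_sqr_le : \sum_s tau s = 1 ->
  \sum_k E (fun s => noise k T s ^+ 2) / (4 * spread k) <= T%:R / (4 * N%:R).
Proof.
move=> tau1; apply: (@le_trans _ _ (\sum_k (\sum_(t < T) E (hit k t)) / (4 * N%:R))).
  apply: ler_sum => k _.
  apply: le_trans (ler_wpM2r _ (expect_noise_sqr k T)) _.
    by rewrite invr_ge0 mulr_ge0 // ltW.
  have fd_gt0 := @fd_grid_gt0 R N N_gt0 k.
  rewrite /spread le_eqVlt; apply/orP; left; apply/eqP; field.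
  by rewrite !gt_eqF ?ltr0n.
rewrite -mulr_suml exchange_big /=.
under eq_bigr => t _ do rewrite -expect_sum (eq_expect _ (sum_hit t)) expect_cst //.
by rewrite sumr_const card_ord.
Qed.

Lemma expect_calib_le : \sum_s tau s = 1 ->
  4 * N%:R ^+ 2 * (\sum_(k < N) fd N (grid R k)) <= T%:R ->
  E (fun s => calib R T (hist T s)) <= 1 / N%:R.
Proof.
move=> tau1 T_ge.
apply: le_trans (ler_expect tau_ge0 calib_play_le) _.
rewrite expectZ expectD expect_cst // expect_sum.
under eq_bigr do rewrite expectD expect_cst // expectZr.
rewrite big_split /= -mulr_sumr.
set G := \sum_k _ in T_ge *.
have N_pos : 0 < N%:R :> R by rewrite ltr0n.
have G_gt0 : 0 < G.
  rewrite /G (bigD1 (Ordinal N_gt0)) //= ltr_pwDl ?fd_grid_gt0 //.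
  by rewrite sumr_ge0 // => k _; rewrite ltW ?fd_grid_gt0.
have T_gt0 : 0 < T%:R :> R.
  by apply: lt_le_trans T_ge; rewrite !mulr_gt0 // exprn_gt0.
have NG_le : N%:R * G <= T%:R / (4 * N%:R).
  rewrite ler_pdivlMr ?mulr_gt0 //; apply: le_trans T_ge.
  by rewrite le_eqVlt; apply/orP; left; apply/eqP; ring.
have noise_le := sum_expect_noise_sqr_le tau1.
rewrite mulrC ler_pdivrMr //.
rewrite (_ : 1 / N%:R * T%:R = 4 * (T%:R / (4 * N%:R))); last by field; lra.
rewrite (_ : T%:R / (2 * N)%:R = 2 * (T%:R / (4 * N%:R))); last by rewrite natrM; field; lra.
lra.
Qed.
End CalibratedForecaster.

Unset Implicit Arguments.

Theorem mainTheorem5 (R : realType) (N T : nat) (hN : (0 < N)%N) :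
  \sum_(k < N) @fd R N (grid R k) = N%:R / 6 + 1 / 4 - 1 / (6 * N%:R)
  /\
  ((2 / 3 : R) * N%:R ^+ 3 + N%:R ^+ 2 - (2 / 3) * N%:R <= T%:R ->
   forall tau : {ffun Pure N T -> R},
     (forall s, 0 <= tau s) -> \sum_s tau s = 1 ->
   forall rnd : R -> 'I_N,
     (forall (p : R) (k : 'I_N), `|p - grid R (rnd p)| <= `|p - grid R k|) ->
     \sum_s tau s * calib R T (play s (fun h => rnd (prob_rain tau h)) T)
       <= 1 / N%:R).
Proof.
split; first exact: sum_fd_grid.
move=> T_ge tau tau_ge0 tau1 rnd rnd_nearest.
apply: expect_calib_le => //; rewrite sum_fd_grid //.
suff -> : 4 * N%:R ^+ 2 * (N%:R / 6 + 1 / 4 - 1 / (6 * N%:R)) =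
  (2 / 3 : R) * N%:R ^+ 3 + N%:R ^+ 2 - (2 / 3) * N%:R by [].
by field; rewrite pnatr_eq0 -lt0n.
Qed.
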